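(* Let $(\mathcal{X},\rho,\nu)$ be a metric measure space, where $\rho$ is a separable metric and $\nu$ is a finite Borel measure. Let $c:\mathcal{X}\to\mathcal{Y}$ be a concept whose set of boundary points $\partial\mathcal{X}$ is essentially countable (i.e. $\partial\mathcal{X}$ is the union of a countable set and a $\nu$-null set). Then, in the smoothed online classification protocol against any $\nu$-dominated adversary, the 1-nearest neighbor rule satisfies $$\lim_{T\to\infty}\frac1T\sum_{t=1}^T\ell(x_t,y_t,\hat y_t)=0\quad\text{almost surely}.$$
   Context: The loss $\ell(x,y,\hat y)$ is a non-negative, bounded loss function with $\ell(x,y,y)=0$. Smoothed online classification protocol: the learner fixes a prediction strategy; the adversary, knowing it, fixes a concept $c:\mathcal{X}\to\mathcal{Y}$; at each time $t=1,2,\dots$ the adversary selects a probability distribution $\mu_t$ on $\mathcal{X}$ (possibly depending on the history) and draws $x_t\sim\mu_t$; the learner predicts $\hat y_t$ from $x_t$ and past data; it incurs loss $\ell(x_t,y_t,\hat y_t)$ where $y_t=c(x_t)$, and $(x_t,y_t,\hat y_t)$ is revealed to both. The 1-nearest neighbor rule predicts $\hat y_t=y_{\mathrm{NN}_t}$ with $\mathrm{NN}_t\in\arg\min_{\tau<t}\rho(x_t,x_\tau)$ (ties broken arbitrarily; prediction at $t=1$ arbitrary). A measure $\nu$ uniformly dominates a family $\mathcal{M}$ of probability distributions if for every $\epsilon>0$ there is $\delta>0$ with $\nu(A)<\delta\Rightarrow\mu(A)<\epsilon$ for all measurable $A$ and all $\mu\in\mathcal{M}$; an adversary is $\nu$-dominated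 if at all times it selects $\mu_t$ from a fixed family uniformly dominated by $\nu$. The margin of $x$ is $m_c(x)=\inf_{x':c(x')\neq c(x)}\rho(x,x')$, and $\partial\mathcal{X}=\{x:m_c(x)=0\}$ is the set of boundary points. *)

From HB Require Import structures.
From mathcomp Require Import all_boot all_order all_algebra.
From mathcomp Require Import all_classical all_reals all_analysis.
From mathcomp Require Import measurable_realfun.
Set Implicit Arguments. Unset Strict Implicit. Unset Printing Implicit Defensive.
Import Order.TTheory GRing.Theory Num.Theory.
Local Open Scope classical_set_scope.
Local Open Scope ring_scope.

Section Defs.
Context {R : realType}.

Definition is_metric {X : Type} (rho : X -> X -> R) : Prop :=
  [/\ forall x y, 0 <= rho x y,
      forall x y, rho x y = 0 <-> x = y,
      forall x y, rho x y = rho y x &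
      forall x y z, rho x z <= rho x y + rho y z].

Definition separable_metric {X : Type} (rho : X -> X -> R) : Prop :=
  exists D : set X, countable D /\
    forall x (e : R), 0 < e -> exists2 z, D z & rho x z < e.

Definition metric_open {X : Type} (rho : X -> X -> R) (U : set X) : Prop :=
  forall x, U x -> exists2 e : R, 0 < e & [set y | rho x y < e] `<=` U.

Definition borel_for {d} {X : measurableType d} (rho : X -> X -> R) : Prop :=
  forall A : set X, measurable A <-> <<s [set U | metric_open rho U] >> A.

(* margin m_c(x) = inf_{x' : c x' <> c x} rho(x,x')  (inf of empty set = +oo) *)
Definition margin {X Y : Type} (rho : X -> X -> R) (c : X -> Y) (x : X) : \bar R :=
  ereal_inf [set (rho x x')%:E | x' in [set x' | c x' <> c x]].

Definition boundary {X Y : Type} (rho : X -> X -> R) (c : X -> Y) : set X :=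
  [set x | margin rho c x = 0%E].

Definition unif_dominates {d} {X : measurableType d}
    (nu : set X -> \bar R) (M : set (probability X R)) : Prop :=
  forall eps : R, 0 < eps -> exists2 delta : R, 0 < delta &
    forall (A : set X) (mu : probability X R), measurable A -> M mu ->
      (nu A < delta%:E)%E -> (mu A < eps%:E)%E.

(* A tie-breaking rule for the 1-NN learner: given a nonempty history h of
   triples (x_tau, y_tau, yhat_tau) and a new point x, nn h x is an index
   tau < size h minimizing rho x x_tau. *)
Definition nn_rule {X Y : Type} (rho : X -> X -> R)
    (nn : seq (X * Y * Y) -> X -> nat) : Prop :=
  forall (h : seq (X * Y * Y)) (x : X) (p0 : X * Y * Y), h <> [::] ->
    (nn h x < size h)%N /\
    forall tau, (tau < size h)%N ->
      rho x (nth p0 h (nn h x)).1.1 <= rho x (nth p0 h tau).1.1.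

(* the 1-nearest neighbor prediction; [first] is the arbitrary prediction at t = 1 *)
Definition oneNN {X Y : Type} (first : X -> Y) (nn : seq (X * Y * Y) -> X -> nat)
    (h : seq (X * Y * Y)) (x : X) : Y :=
  match h with
  | [::] => first x
  | _ => (nth (x, first x, first x) h (nn h x)).1.2
  end.

(* history of the first t rounds (rounds indexed 0,1,...) given the instance
   sequence xs: triples (x_tau, c x_tau, yhat_tau) *)
Fixpoint history {X Y : Type} (c : X -> Y) (first : X -> Y)
    (nn : seq (X * Y * Y) -> X -> nat) (xs : nat -> X) (t : nat) : seq (X * Y * Y) :=
  match t with
  | 0 => [::]
  | t'.+1 => let h := history c first nn xs t' in
             rcons h (xs t', c (xs t'), oneNN first nn h (xs t'))
  end.

Definition past_sigma {dO d} {Omega : measurableType dO} {X : measurableType d}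
    (Xs : nat -> Omega -> X) (t : nat) : set (set Omega) :=
  <<s \bigcup_(i in [set i : nat | (i < t)%N]) [set Xs i @^-1` A | A in @measurable d X] >>.

End Defs.

From HB Require Import structures.
From mathcomp Require Import all_boot all_order all_algebra.
From mathcomp Require Import all_classical all_reals all_analysis.
From mathcomp Require Import measurable_realfun.
From mathcomp Require Import ring lra zify.
Import Order.TTheory GRing.Theory Num.Theory.
Import numFieldNormedType.Exports.
Local Open Scope classical_set_scope.
Local Open Scope ring_scope.

(* Up to a nu-null set, X is covered by countably many cells on which 1-NN errs
   at most once: the singletons of the countable part of the boundary, and the
   balls B(z, r), z in a countable dense set, such that c is constant on
   B(z, 3r) -- once a point of B(z, r) has been seen, the nearest neighbour of
   a later point of B(z, r) lies within 2r of it, hence in B(z, 3r).  Fix q.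
   Finitely many cells leave a remainder of nu-measure < delta, which by
   uniform domination has conditional probability <= 4^-(q+1) at every round,
   so the remainder is visited more than T/(q+1) times before T with
   probability <= 2^-(T+1); by Borel-Cantelli this happens only finitely often
   almost surely.  Hence the cumulative loss is eventually <= B (n + T/(q+1))
   for every q. *)

Definition first_visit (A : nat -> Prop) (t : nat) : Prop :=
  A t /\ forall tau, (tau < t)%N -> ~ A tau.

Lemma sum_first_visit (A : nat -> Prop) T :
  (\sum_(t < T) `[< first_visit A t >])%N = `[< exists2 tau, (tau < T)%N & A tau >].
Proof.
elim: T => [|T IH]; first by rewrite big_ord0 asboolF // => -[].
rewrite big_ord_recr /= IH.
have [[tau ltT Atau]|notA] := pselect (exists2 tau, (tau < T)%N & A tau).
  rewrite (asboolT (ex_intro2 _ _ tau ltT Atau)).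
  rewrite (asboolT (ex_intro2 _ _ tau (ltnW ltT) Atau)).
  by rewrite asboolF // => -[_ /(_ tau ltT)].
rewrite (asboolF notA) add0n.
have [AT|nAT] := pselect (A T).
  rewrite (asboolT (ex_intro2 _ _ T (ltnSn T) AT)) asboolT //.
  by split=> // tau ltT Atau; apply: notA; exists tau.
rewrite !asboolF // => [[tau]|[//]].
rewrite ltnS leq_eqVlt => /orP[/eqP->//|ltT Atau].
by apply: notA; exists tau.
Qed.

Lemma sum_first_visits_le (A : nat -> nat -> Prop) n T :
  (\sum_(t < T) `[< exists2 i, (i < n)%N & first_visit (A i) t >] <= n)%N.
Proof.
apply: (@leq_trans (\sum_(t < T) \sum_(i < n) `[< first_visit (A i) t >])%N).
  apply: leq_sum => t _.
  have [[i ltin fi]|notfi] := pselect (exists2 i, (i < n)%N & first_visit (A i) t).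
    rewrite (asboolT (ex_intro2 _ _ i ltin fi)) (bigD1 (Ordinal ltin)) //=.
    by rewrite (asboolT fi).
  by rewrite (asboolF notfi).
rewrite exchange_big /=.
apply: (@leq_trans (\sum_(i < n) 1)%N); last by rewrite sum1_card card_ord.
apply: leq_sum => i _; rewrite sum_first_visit.
by case: asboolP.
Qed.

(* Once a point of [U] has been observed, the 1-NN rule labels every later point
   of [U] correctly. *)
Definition nn_safe {R : realType} {X Y : Type} (rho : X -> X -> R) (c : X -> Y)
    (U : set X) : Prop :=
  forall x y x', U x -> U y -> rho x x' <= rho x y -> c x' = c x.

Section OneNearestNeighbor.
Context {R : realType} {X Y : Type} {rho : X -> X -> R} {c : X -> Y}.
Context {first : X -> Y} {nn : seq (X * Y * Y) -> X -> nat}.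
Hypothesis nnP : nn_rule rho nn.

Lemma size_history xs t : size (history c first nn xs t) = t.
Proof. by elim: t => //= t IH; rewrite size_rcons IH. Qed.

Lemma nth_history xs t p0 tau : (tau < t)%N ->
  nth p0 (history c first nn xs t) tau =
  (xs tau, c (xs tau), oneNN first nn (history c first nn xs tau) (xs tau)).
Proof.
elim: t => // t IH; rewrite ltnS leq_eqVlt => /orP[/eqP->|lt] /=.
  by rewrite nth_rcons size_history ltnn eqxx.
by rewrite nth_rcons size_history lt IH.
Qed.

Lemma oneNN_correct {U : set X} {xs t tau} : nn_safe rho c U -> (tau < t)%N ->
  U (xs t) -> U (xs tau) ->
  oneNN first nn (history c first nn xs t) (xs t) = c (xs t).
Proof.
move=> safeU lt_tau_t Ut Utau.
set h := history c first nn xs t.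
have size_h : size h = t by exact: size_history.
have h_neq0 : h <> [::] by move=> h0; rewrite h0 in size_h; rewrite -size_h in lt_tau_t.
set p0 := (xs t, first (xs t), first (xs t)).
have [lt_nn nn_min] := nnP h (xs t) p0 h_neq0.
rewrite size_h in lt_nn nn_min.
have := nn_min _ lt_tau_t; rewrite !nth_history // => /= le_rho.
have -> : oneNN first nn h (xs t) = (nth p0 h (nn h (xs t))).1.2.
  by rewrite /oneNN; case: (h) h_neq0.
by rewrite nth_history //=; exact: safeU le_rho.
Qed.

Context {loss : X -> Y -> Y -> R} {B : R}.
Hypothesis loss_ge0 : forall x y y', 0 <= loss x y y'.
Hypothesis loss_le : forall x y y', loss x y y' <= B.
Hypothesis loss_diag : forall x y, loss x y y = 0.

Lemma nn_loss_bound (cell : nat -> set X) (n : nat) (xs : nat -> X) T :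
  (forall i, nn_safe rho c (cell i)) ->
  \sum_(t < T) loss (xs t) (c (xs t)) (oneNN first nn (history c first nn xs t) (xs t))
  <= B * (n%:R + (\sum_(t < T) `[< (~` \bigcup_(i in `I_n) cell i) (xs t) >])%N%:R).
Proof.
move=> safe; set U := ~` _.
have B_ge0 : 0 <= B by apply: le_trans (loss_le (xs 0%N) (c (xs 0%N)) (c (xs 0%N))).
pose new t := `[< exists2 i, (i < n)%N & first_visit (fun tau => cell i (xs tau)) t >].
apply: (@le_trans _ _ (\sum_(t < T) B * ((new t)%:R + (`[< U (xs t) >] : nat)%:R))).
  apply: ler_sum => t _.
  have [Ut|] := pselect (U (xs t)).
    rewrite (asboolT Ut); apply: le_trans (loss_le _ _ _) _.
    by rewrite ler_peMr // lerDr.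
  move=> /contrapT[i /= ltin celli].
  have [[tau lt_tau celltau]|unvisited] :=
    pselect (exists2 tau, (tau < t)%N & cell i (xs tau)).
    rewrite (oneNN_correct (safe i) lt_tau celli celltau) loss_diag.
    by rewrite mulr_ge0 // addr_ge0.
  have newt : new t.
    apply/asboolP; exists i => //; split => // tau lt_tau celltau.
    by apply: unvisited; exists tau.
  rewrite newt; apply: le_trans (loss_le _ _ _) _.
  by rewrite ler_peMr // lerDl.
rewrite -mulr_sumr ler_wpM2l // big_split /= -!natr_sum lerD2r ler_nat.
exact: (sum_first_visits_le (fun i tau => cell i (xs tau))).
Qed.

End OneNearestNeighbor.

Section MetricCells.
Context {R : realType} {X Y : Type}.
Variables (rho : X -> X -> R) (c : X -> Y).
Hypothesis rho_metric : is_metric rho.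

Lemma margin_gt0 x : margin rho c x <> 0%E ->
  exists2 r : R, 0 < r & forall x', c x' <> c x -> r <= rho x x'.
Proof.
have [rho_ge0 _ _ _] := rho_metric.
have margin_le x' : c x' <> c x -> (margin rho c x <= (rho x x')%:E)%E.
  by move=> cx'; apply: ereal_inf_lbound; exists x'.
have margin_ge0 : (0 <= margin rho c x)%E.
  by apply/ereal_infP => _ [x' _ <-]; rewrite lee_fin.
case: (margin rho c x) margin_le margin_ge0 => [r| |] //= margin_le r_ge0 r_neq0.
  exists r => [|x' /margin_le]; last by rewrite lee_fin.
  by rewrite lt_neqAle -lee_fin r_ge0 andbT eq_sym; apply/eqP => r0; apply: r_neq0; rewrite r0.
by exists 1 => // x' /margin_le; rewrite leye_eq.
Qed.

Definition nn_cell (z e : nat -> X) (i : nat) : set X :=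
  match (unpickle i : option ((nat * nat) + nat)) with
  | Some (inl (k, j)) =>
      if `[< forall y y', rho (z j) y < 3 / k.+1%:R -> rho (z j) y' < 3 / k.+1%:R ->
                     c y = c y' >]
      then [set y | rho (z j) y < k.+1%:R^-1] else set0
  | Some (inr i') => [set e i']
  | None => set0
  end.

Lemma nn_cell_safe z e i : nn_safe rho c (nn_cell z e i).
Proof.
have [rho_ge0 rho_eq0 rhoC rho_tri] := rho_metric.
rewrite /nn_cell; case: (unpickle i) => [[[k j]|i']|] //.
  case: asboolP => [c_const|_] x y x' //= zx zy x'_near.
  have := rho_tri (z j) x x'; have := rho_tri x (z j) y; rewrite (rhoC x (z j)).
  have : 0 < k.+1%:R^-1 :> R by rewrite invr_gt0 ltr0n.
  move=> r_gt0 tri1 tri2; set u := k.+1%:R^-1 in zx zy r_gt0 *.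
  by apply: c_const; [change (rho (z j) x' < 3 * u)|change (rho (z j) x < 3 * u)]; lra.
move=> x y x' /= -> -> x'_near.
rewrite (rho_eq0 (e i') (e i')).2 // in x'_near.
have : rho (e i') x' = 0 by apply/le_anti; rewrite x'_near rho_ge0.
by move/rho_eq0 => ->.
Qed.

Lemma nn_cell_cover (z e : nat -> X) (C : set X) :
  (forall x (r : R), 0 < r -> exists j, rho x (z j) < r) -> C `<=` range e ->
  (~` \bigcup_i nn_cell z e i) `<=` boundary rho c `\` C.
Proof.
have [_ _ rhoC rho_tri] := rho_metric.
move=> z_dense Ce x uncovered; split; last first.
  move=> Cx; apply: uncovered; have [i _ ei] := Ce _ Cx.
  by exists (pickle (inr i : (nat * nat) + nat)) => //; rewrite /nn_cell pickleK.
apply: contrapT => /margin_gt0[r r_gt0 far]; apply: uncovered.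
have [k k_gt] : exists k, 4 / r < k.+1%:R by exists (Num.truncn (4 / r)); exact: truncnS_gt.
set u : R := k.+1%:R^-1.
have u_gt0 : 0 < u by rewrite invr_gt0 ltr0n.
have u4 : 4 * u < r.
  by rewrite -ltr_pdivlMr ?invr_gt0 // invrK mulrC -ltr_pdivrMr.
have [j zj] := z_dense x u u_gt0.
exists (pickle (inl (k, j) : (nat * nat) + nat)) => //.
rewrite /nn_cell pickleK /=.
have c_ball y : rho (z j) y < 3 * u -> c y = c x.
  move=> zy; apply: contrapT => /far; have := rho_tri x (z j) y; lra.
case: asboolP => [_|]; first by rewrite /= rhoC.
by case=> y y' /c_ball -> /c_ball ->.
Qed.

End MetricCells.

Section MetricMeasurable.
Context {R : realType} {d : measure_display} {X : measurableType d}.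
Context {rho : X -> X -> R}.
Hypotheses (rho_metric : is_metric rho) (rho_borel : borel_for rho).

Lemma metric_open_ball z r : metric_open rho [set y | rho z y < r].
Proof.
have [_ _ _ rho_tri] := rho_metric.
move=> y /= zy; exists (r - rho z y) => [|y' /= yy']; first by rewrite subr_gt0.
by apply: le_lt_trans (rho_tri z y y') _; rewrite -ltrBrDl.
Qed.

Lemma measurable_ball z r : measurable [set y | rho z y < r].
Proof. by apply/rho_borel; apply: sub_gen_smallest; exact: metric_open_ball. Qed.

Lemma measurable_point (x : X) : measurable [set x].
Proof.
have [rho_ge0 rho_eq0 _ _] := rho_metric.
rewrite -[[set x]]setCK; apply/measurableC/rho_borel; apply: sub_gen_smallest => y /= yx.
exists (rho y x) => [|y' /= yy' y'x]; last by rewrite y'x ltxx in yy'.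
by rewrite lt_neqAle rho_ge0 andbT eq_sym; apply/eqP => /rho_eq0.
Qed.

Lemma measurable_nn_cell {Y : Type} (c : X -> Y) z e i :
  measurable (nn_cell rho c z e i).
Proof.
rewrite /nn_cell; case: (unpickle i) => [[[k j]|i']|] //.
  by case: asboolP => _; [exact: measurable_ball|exact: measurable0].
exact: measurable_point.
Qed.

Lemma exists_nn_cells {Y : Type} (c : X -> Y) {C : set X} :
  separable_metric rho -> countable C ->
  exists cell : nat -> set X, [/\ forall i, measurable (cell i),
    forall i, nn_safe rho c (cell i) &
    (~` \bigcup_i cell i) `<=` boundary rho c `\` C].
Proof.
move=> [D [/pcard_surjP[z Dz] D_dense]] /pcard_surjP[e Ce].
exists (nn_cell rho c z e); split.
- exact: measurable_nn_cell.
- exact: nn_cell_safe.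
apply: nn_cell_cover => // x r r_gt0.
have [y Dy xy] := D_dense x r r_gt0.
by have [j _ zjy] := Dz _ Dy; exists j; rewrite zjy.
Qed.

End MetricMeasurable.

Lemma uncovered_measure_lt {d} {T : measurableType d} {R : realType}
    (nu : {measure set T -> \bar R}) (cell : nat -> set T) :
  (nu setT < +oo)%E -> (forall i, measurable (cell i)) ->
  nu.-negligible (~` \bigcup_i cell i) ->
  forall delta : R, 0 < delta ->
    exists n, (nu (~` \bigcup_(i in `I_n) cell i) < delta%:E)%E.
Proof.
move=> nu_fin mcell nu_uncovered delta delta_gt0.
pose U n := ~` \bigcup_(i in `I_n) cell i.
have mU n : measurable (U n) by apply/measurableC/bigcup_measurable => i _.
have U_noninc : nonincreasing_seq U.
  move=> m n le_mn; apply/subsetPset => x; apply: contra_not => -[i /= ltim celli].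
  by exists i => //=; exact: leq_trans ltim le_mn.
have capU : \bigcap_n U n = ~` \bigcup_i cell i.
  rewrite /U -setC_bigcup; congr (~` _); apply/seteqP; split=> x.
    by move=> [n _ [i _ celli]]; exists i.
  by move=> [i _ celli]; exists i.+1 => //; exists i => /=.
have U0_fin : (nu (U 0%N) < +oo)%E.
  by apply: le_lt_trans nu_fin; apply: le_measure; rewrite ?inE.
have U_cvg := nonincreasing_cvg_mu U0_fin mU (bigcapT_measurable mU) U_noninc.
rewrite capU (proj1 (negligibleP _ _) nu_uncovered) in U_cvg; last first.
  by apply/measurableC/bigcup_measurable => i _.
have [n _ U_lt] := U_cvg _ (@nbhs_open_ereal_lt _ 0 (fun=> delta) delta_gt0).
by exists n; exact: (U_lt n (leqnn n)).
Qed.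

Section SigmaAlgebraClosure.
Context {T : pointedType} (G : set (set T)).
Hypothesis G_sigma : sigma_algebra setT G.

Let G_measurable A : G A = (measurable : set (set (g_sigma_algebraType G))) A.
Proof. by rewrite /measurable /= (sigma_algebra_id G_sigma). Qed.

Lemma sigma_algebraT : G setT.
Proof. by rewrite G_measurable; exact: measurableT. Qed.

Lemma sigma_algebraU A B : G A -> G B -> G (A `|` B).
Proof. by rewrite !G_measurable; exact: measurableU. Qed.

Lemma sigma_algebraI A B : G A -> G B -> G (A `&` B).
Proof. by rewrite !G_measurable; exact: measurableI. Qed.

End SigmaAlgebraClosure.

Definition count_events {T : Type} (I : nat -> set T) (w : T) (n : nat) : nat :=
  (\sum_(t < n) `[< I t w >])%N.

Lemma count_events_ge0 {T : Type} (I : nat -> set T) n :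
  [set w | (0 <= count_events I w n)%N] = setT.
Proof. by apply/seteqP; split. Qed.

Lemma count_events0_gt {T : Type} (I : nat -> set T) m :
  [set w | (m < count_events I w 0)%N] = set0.
Proof. by apply/seteqP; split=> w //=; rewrite /count_events big_ord0. Qed.

Lemma count_events_geS {T : Type} (I : nat -> set T) n m :
  [set w | (m.+1 <= count_events I w n.+1)%N] =
  [set w | (m.+1 <= count_events I w n)%N] `|`
  ([set w | (m <= count_events I w n)%N] `&` I n).
Proof.
apply/seteqP; split => w /=; rewrite /count_events big_ord_recr /=.
  have [In|nIn] := pselect (I n w); last by rewrite (asboolF nIn) addn0; left.
  rewrite (asboolT In) addn1 ltnS {1}leq_eqVlt => /orP[/eqP->|]; last by left.
  by right.
case=> [le_mn|[le_mn In]]; last by rewrite (asboolT In) addn1.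
exact: leq_trans le_mn (leq_addr _ _).
Qed.

Lemma half_powers_summable {R : realType} :
  (\sum_(0 <= n <oo) ((2^-1 : R) ^+ n.+1)%:E < +oo)%E.
Proof.
have geom := @cvg_geometric_eseries_half R 1 0.
rewrite (_ : (fun k => _) = (fun n => ((2^-1 : R) ^+ n.+1)%:E)) in geom; last first.
  by apply: funext => k; rewrite natrX div1r -exprVn addn1.
by rewrite /eseries (cvg_lim _ geom) // expr0 divr1 ltry.
Qed.

Lemma exp2_mul_small_le {R : realFieldType} (eps : R) q n :
  0 <= eps -> eps <= 2^-1 ^+ (2 * q.+1) ->
  2 ^+ n * eps ^+ (n %/ q.+1).+1 <= 2^-1 ^+ n.+1.
Proof.
move=> eps_ge0 eps_small.
have half_ge0 : (0 : R) <= 2^-1 by rewrite invr_ge0.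
have half_le1 : (2^-1 : R) <= 1 by rewrite invf_le1 // ler1n.
apply: (@le_trans _ _ (2 ^+ n * 2^-1 ^+ (2 * n.+1))).
  rewrite ler_wpM2l ?exprn_ge0 //.
  apply: (@le_trans _ _ ((2^-1 ^+ (2 * q.+1)) ^+ (n %/ q.+1).+1)).
    by rewrite ler_pXn2r // nnegrE ?exprn_ge0.
  rewrite -exprM; apply: ler_wiXn2l => //.
  by rewrite -mulnA leq_mul2l /= mulnC; exact: ltn_ceil.
rewrite (_ : 2 * n.+1 = n + n.+2)%N; last by lia.
rewrite exprD mulrA -exprMn divff ?pnatr_eq0 // expr1n mul1r.
exact: ler_wiXn2l.
Qed.

Section AdaptedEvents.
Context {d : measure_display} {Omega : measurableType d} {R : realType}.
Context {P : probability Omega R} {F : nat -> set (set Omega)}.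
Hypotheses (F_sigma : forall t, sigma_algebra setT (F t))
  (F_meas : forall t, F t `<=` measurable) (F_mono : forall t, F t `<=` F t.+1).
Context {I : nat -> set Omega} {eps : R}.
Hypotheses (I_adapted : forall t, F t.+1 (I t)) (eps_ge0 : 0 <= eps)
  (I_cond : forall t A, F t A -> (P (A `&` I t) <= eps%:E * P A)%E).

Lemma count_events_ge_adapted n m : F n [set w | (m <= count_events I w n)%N].
Proof.
elim: n m => [|n IH] [|m]; rewrite ?count_events_ge0 ?count_events0_gt.
- exact: sigma_algebraT.
- by have [] := F_sigma 0%N.
- exact: sigma_algebraT.
rewrite count_events_geS; apply: sigma_algebraU => //; first exact/F_mono/IH.
by apply: sigma_algebraI => //; exact/F_mono/IH.
Qed.

Lemma measure_count_events_ge n m :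
  (P [set w | (m <= count_events I w n)%N] <= (2 ^+ n * eps ^+ m)%:E)%E.
Proof.
elim: n m => [|n IH] [|m]; rewrite ?count_events_ge0 ?count_events0_gt.
- by rewrite probability_setT expr0 mulr1.
- by rewrite measure0 lee_fin mulr_ge0 ?exprn_ge0.
- by rewrite probability_setT expr0 mulr1 lee_fin exprn_ege1 // ler1n.
rewrite count_events_geS.
have mE k j : measurable [set w | (j <= count_events I w k)%N].
  exact/F_meas/count_events_ge_adapted.
have mI : measurable (I n) by exact/(F_meas n.+1)/I_adapted.
apply: (le_trans (measureU2 P (mE _ _) (measurableI _ _ (mE _ _) mI))).
apply: (le_trans (leeD (IH m.+1) (I_cond _ _ (count_events_ge_adapted n m)))).
apply: (le_trans (leeD (lexx _) (lee_wpmul2l _ (IH m)))); first by rewrite lee_fin.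
by rewrite -EFinM -EFinD lee_fin !exprS; lra.
Qed.

Lemma ae_count_events_le q : eps <= 2^-1 ^+ (2 * q.+1) ->
  {ae P, forall w, \forall n \near \oo, (count_events I w n <= n %/ q.+1)%N}.
Proof.
move=> eps_small.
pose E n := [set w | ((n %/ q.+1).+1 <= count_events I w n)%N].
have mE n : measurable (E n) by exact/F_meas/count_events_ge_adapted.
exists (lim_sup_set E); split.
- by apply: bigcapT_measurable => n; apply: bigcup_measurable => j _.
- apply: lim_sup_set_cvg0 => //; apply: le_lt_trans half_powers_summable.
  apply: lee_nneseries => // n _; apply: le_trans (measure_count_events_ge _ _) _.
  by rewrite lee_fin exp2_mul_small_le.
move=> w /= not_eventually N _; apply: contrapT => rarely; apply: not_eventually.
exists N => // n /= le_Nn; rewrite leqNgt; apply/negP => En.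
by apply: rarely; exists n.
Qed.

End AdaptedEvents.

Section AdaptiveProcess.
Context {R : realType} {d dO : measure_display}.
Context {X : measurableType d} {Omega : measurableType dO}.
Context {P : probability Omega R} {Xs : nat -> Omega -> X}.
Hypothesis Xs_meas : forall t, measurable_fun setT (Xs t).
Context {law : nat -> Omega -> probability X R}.
Hypothesis law_meas : forall t (A : set X), measurable A ->
  forall B : set (\bar R), measurable B -> past_sigma Xs t ((fun w => law t w A) @^-1` B).
Hypothesis law_eq : forall t (A : set X), measurable A ->
  forall F : set Omega, past_sigma Xs t F ->
    P (F `&` Xs t @^-1` A) = (\int[P]_(w in F) law t w A)%E.

Lemma past_sigma_measurable {t} {F : set Omega} : past_sigma Xs t F -> measurable F.
Proof.
apply: smallest_sub F; first exact: sigma_algebra_measurable.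
by move=> _ [i _ [A mA <-]]; rewrite -[X in measurable X]setTI; exact: Xs_meas.
Qed.

Lemma past_sigma_mono t : past_sigma Xs t `<=` past_sigma Xs t.+1.
Proof. by apply: sub_sigma_algebra2 => A [i /= ltit FA]; exists i => //=; exact: ltnW. Qed.

Lemma past_sigma_preimage t (A : set X) : measurable A -> past_sigma Xs t.+1 (Xs t @^-1` A).
Proof. by move=> mA; apply: sub_sigma_algebra; exists t => //=; exists A. Qed.

Lemma measure_visit_le (A : set X) (eps : R) : measurable A ->
  (forall t w, (law t w A <= eps%:E)%E) ->
  forall t F, past_sigma Xs t F -> (P (F `&` Xs t @^-1` A) <= eps%:E * P F)%E.
Proof.
move=> mA law_le t F FF; have mF := past_sigma_measurable FF.
rewrite law_eq // -integral_cst //; apply: ge0_le_integral => // _ B mB.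
exact: measurableI _ _ mF (past_sigma_measurable (law_meas _ _ mA _ mB)).
Qed.

Lemma ae_rare_visits q (A : set X) : measurable A ->
  (forall t w, (law t w A <= (2^-1 ^+ (2 * q.+1))%:E)%E) ->
  {ae P, forall w, \forall n \near \oo,
    (count_events (fun t => Xs t @^-1` A) w n <= n %/ q.+1)%N}.
Proof.
move=> mA law_le.
apply: (@ae_count_events_le _ _ _ P (past_sigma Xs) _ _ _ _ (2^-1 ^+ (2 * q.+1))) => //.
- by move=> t; exact: smallest_sigma_algebra.
- by move=> t F; exact: past_sigma_measurable.
- exact: past_sigma_mono.
- by move=> t; exact: past_sigma_preimage.
- exact: measure_visit_le.
Qed.

End AdaptiveProcess.

Lemma mean_cvg0 {R : realType} {a : nat -> R} {B : R} :
  0 <= B -> (forall n, 0 <= a n) ->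
  (forall q, exists k : nat, \forall n \near \oo, a n <= B * (k%:R + (n %/ q.+1)%:R)) ->
  (fun n => n%:R^-1 * a n) @ \oo --> (0 : R^o).
Proof.
move=> B_ge0 a_ge0 a_le; apply/cvgr0Pnorm_lt => eps eps_gt0.
have [q q_large] : exists q, 2 * B < q.+1%:R * eps.
  by exists (Num.truncn (2 * B / eps)); rewrite -ltr_pdivrMr // truncnS_gt.
have [k a_le_q] := a_le q.
near=> n.
have n_gt0 : (0 : R) < n%:R by rewrite ltr0n; near: n; exact: nbhs_infty_gt.
have n_large : 2 * B * k%:R < n%:R * eps.
  rewrite -ltr_pdivrMr //; apply: (@lt_le_trans _ _ (2 * B * k%:R / eps + 1)).
    by rewrite ltrDl.
  by near: n; exact: nbhs_infty_ger.
have div_le : (n %/ q.+1)%:R * q.+1%:R <= n%:R :> R by rewrite -natrM ler_nat leq_divM.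
have Bm_le : 2 * B * (n %/ q.+1)%:R <= n%:R * eps.
  have m_ge0 : (0 : R) <= (n %/ q.+1)%:R by [].
  nra.
have a_le_n : a n <= B * (k%:R + (n %/ q.+1)%:R) by near: n; exact: a_le_q.
rewrite normrM ger0_norm ?invr_ge0 // ger0_norm // mulrC ltr_pdivrMr //; lra.
Unshelve. all: by end_near.
Qed.
Theorem theorem1 (R : realType)
  (* metric measure space (X, rho, nu) *)
  (d : measure_display) (X : measurableType d) (rho : X -> X -> R)
  (Hmetric : is_metric rho) (Hsep : separable_metric rho) (Hborel : borel_for rho)
  (nu : {measure set X -> \bar R}) (Hfin : (nu setT < +oo)%E)
  (* labels, concept, loss *)
  (Y : Type) (c : X -> Y)
  (Hbd : exists C : set X, countable C /\ nu.-negligible (boundary rho c `\` C))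
  (loss : X -> Y -> Y -> R)
  (Hloss_nonneg : forall x y y', 0 <= loss x y y')
  (Hloss_bdd : exists B : R, forall x y y', loss x y y' <= B)
  (Hloss_diag : forall x y, loss x y y = 0)
  (* the 1-NN learner (arbitrary tie-breaking and arbitrary first prediction) *)
  (first : X -> Y) (nn : seq (X * Y * Y) -> X -> nat) (Hnn : nn_rule rho nn)
  (* the nu-dominated adaptive adversary *)
  (M : set (probability X R)) (HM : unif_dominates nu M)
  (adv : nat -> seq (X * Y * Y) -> probability X R)
  (Hadv : forall t h, M (adv t h))
  (* the resulting random process x_0, x_1, ... on a probability space *)
  (dO : measure_display) (Omega : measurableType dO) (P : probability Omega R)
  (Xs : nat -> Omega -> X) (HXs : forall t, measurable_fun setT (Xs t))
  (Hlaw_meas : forall t (A : set X), measurable A ->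
     forall B : set (\bar R), measurable B ->
       past_sigma Xs t
         ((fun w => adv t (history c first nn (fun i => Xs i w) t) A) @^-1` B))
  (Hlaw : forall t (A : set X), measurable A ->
     forall F : set Omega, past_sigma Xs t F ->
       P (F `&` Xs t @^-1` A) =
       (\int[P]_(w in F) adv t (history c first nn (fun i => Xs i w) t) A)%E) :
  {ae P, forall w,
     (fun T : nat => (T%:R)^-1 * \sum_(t < T)
         loss (Xs t w) (c (Xs t w))
              (oneNN first nn (history c first nn (fun i => Xs i w) t) (Xs t w)))
     @ \oo --> (0 : R^o)}.
Proof.
have [B loss_le] := Hloss_bdd.
have B_ge0 : 0 <= B by apply: le_trans (loss_le point (c point) (c point)).
have [C [C_countable boundary_null]] := Hbd.
have [cell [mcell cell_safe uncovered]] := exists_nn_cells Hmetric Hborel c Hsep C_countable.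
pose U n := ~` \bigcup_(i in `I_n) cell i.
have rare q : {ae P, forall w, exists n, \forall T \near \oo,
    (count_events (fun t => Xs t @^-1` U n) w T <= T %/ q.+1)%N}.
  have eps_gt0 : 0 < 2^-1 ^+ (2 * q.+1) :> R by rewrite exprn_gt0 // invr_gt0.
  have [delta delta_gt0 small] := HM _ eps_gt0.
  have [n nuU] := uncovered_measure_lt nu cell Hfin mcell
    (negligibleS uncovered boundary_null) _ delta_gt0.
  have mU : measurable (U n) by apply/measurableC/bigcup_measurable => i _.
  apply: filterS (ae_rare_visits HXs Hlaw_meas Hlaw q (U n) mU _) => [w rare_w|t w].
    by exists n.
  exact/ltW/small.
apply: filterS (ae_foralln rare) => w rare_w.
apply: (mean_cvg0 B_ge0) => [T|q].
  by apply: sumr_ge0 => t _; exact: Hloss_nonneg.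
have [n rare_wq] := rare_w q; exists n; apply: filterS rare_wq => T count_le.
apply: (le_trans (nn_loss_bound Hnn Hloss_nonneg loss_le Hloss_diag _ n _ T cell_safe)).
by rewrite ler_wpM2l // lerD2l ler_nat.
Qed.
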